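(* Let $\mathcal{L}_1:\mathcal{M}_{d_1}\to\mathcal{M}_{d_1}$ and $\mathcal{L}_2:\mathcal{M}_{d_2}\to\mathcal{M}_{d_2}$ be unital, reversible Liouvillians with almost commuting unitary eigenbases associated to finite abelian groups $G_1$ and $G_2$, and let $P^1_t$, $P^2_t$ be the associated classical semigroups acting on $V(G_1)$, $V(G_2)$. Then for all $t\geq0$, $$\|e^{t\mathcal{L}_1}\otimes e^{t\mathcal{L}_2}\|_{2\to4,\frac{\mathbb{1}}{d_1d_2}}\leq\|P^1_t\otimes P^2_t\|_{2\to4}.$$
   Context: A Liouvillian generates a semigroup of completely positive trace-preserving maps; unital: $\mathcal{L}(\mathbb{1})=0$; reversible: self-adjoint w.r.t. the Hilbert–Schmidt inner product. An almost commuting unitary eigenbasis of $\mathcal{L}$ on $\mathcal{M}_d$ associated to a finite abelian group $G$ ($|G|=d^2$) consists of unitaries $\{U_i\}_{i\in G}$ with $U_0=\mathbb{1}$, $\mathcal{L}(U_i)=\lambda_iU_i$, $\text{tr}(U_i^\dagger U_j)=d\delta_{ij}$, and $U_iU_j=\phi(i,j)U_jU_i=\phi'(i,j)U_{i+j}$ with unimodular phases. Fix an isomorphism $i\mapsto\chi_i$ of $G$ onto its character group. $V(G)$ = functions $G\to\mathbb{C}$, $\|f\|_p^p=\frac1{|G|}\sum_g|f(g)|^p$, $\hat f(i)=\frac1{|G|}\sum_g\overline{\chi_i(g)}f(g)$; the associated classical semigroup is $P_tf=\sum_i e^{\lambda_it}\hat f(i)\chi_i$. $V(G_1)\otimes V(G_2)\cong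 V(G_1\times G_2)$ with the corresponding norm; $\|A\|_{2\to4}=\sup_{f\ne0}\|Af\|_4/\|f\|_2$. On $\mathcal{M}_D$ ($D=d_1d_2$): $\|Y\|_{p,\frac{\mathbb{1}}{D}}=D^{-1/p}(\text{tr}|Y|^p)^{1/p}$ and $\|S\|_{2\to4,\frac{\mathbb{1}}{D}}=\sup_{X\ne0}\|S(X)\|_{4,\frac{\mathbb{1}}{D}}/\|X\|_{2,\frac{\mathbb{1}}{D}}$. *)

From HB Require Import structures.
From mathcomp Require Import all_boot all_order all_algebra.
From mathcomp Require Import all_classical all_reals all_analysis.
From mathcomp Require Import complex mxtens.
Set Implicit Arguments. Unset Strict Implicit. Unset Printing Implicit Defensive.
Import Order.TTheory GRing.Theory Num.Theory.
Import numFieldNormedType.Exports.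
Local Open Scope classical_set_scope.
Local Open Scope ring_scope.
Local Open Scope complex_scope.

Section QuantumDefs.
Variable R : realType.
Local Notation C := (R[i]).

Definition cexp (z : C) : C :=
  (expR (complex.Re z))%:C * ((cos (complex.Im z)) +i* (sin (complex.Im z))).

Definition adjmx m n (A : 'M[C]_(m, n)) : 'M[C]_(n, m) := (map_mx conjc A)^T.

Definition hs_inner d (A B : 'M[C]_d) : C := \tr (adjmx A *m B).

Definition is_linear_map d (S : 'M[C]_d -> 'M[C]_d) :=
  forall (a : C) (X Y : 'M[C]_d), S (a *: X + Y) = a *: S X + S Y.

(* positive semidefinite: v^* A v >= 0 for all v (in C, "0 <= z" means z real
   and nonnegative) *)
Definition psd n (A : 'M[C]_n) := forall v : 'cV[C]_n, 0 <= (adjmx v *m A *m v) 0 0.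

(* tensor product S (x) T of superoperators, acting on M_{d1 d2} = M_{d1} (x) M_{d2}
   (Kronecker convention of mxtens: index (i1,i2) |-> i1 * d2 + i2) *)
Definition suptens d1 d2 (S : 'M[C]_d1 -> 'M[C]_d1) (T : 'M[C]_d2 -> 'M[C]_d2)
  (X : 'M[C]_(d1 * d2)) : 'M[C]_(d1 * d2) :=
  \sum_(a < d1) \sum_(b < d1) \sum_(c < d2) \sum_(e < d2)
     X (mxtens_index (a, c)) (mxtens_index (b, e))
       *: (S (delta_mx a b) *t T (delta_mx c e)).

Definition completely_positive d (S : 'M[C]_d -> 'M[C]_d) :=
  forall (k : nat) (X : 'M[C]_(k * d)),
    psd X -> psd (suptens (fun Y : 'M[C]_k => Y) S X).

Definition trace_preserving d (S : 'M[C]_d -> 'M[C]_d) :=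
  forall X : 'M[C]_d, \tr (S X) = \tr X.

Definition exp_partial d (L : 'M[C]_d -> 'M[C]_d) (t : R) (N : nat) (X : 'M[C]_d)
  : 'M[C]_d :=
  \sum_(k < N) ((t ^+ k / (k`!)%:R)%:C) *: iter k L X.

Definition expL d (L : 'M[C]_d -> 'M[C]_d) (t : R) (X : 'M[C]_d) : 'M[C]_d :=
  \matrix_(i, j)
    ((lim ((fun N => complex.Re (exp_partial L t N X i j)) @ \oo))
       +i* (lim ((fun N => complex.Im (exp_partial L t N X i j)) @ \oo))).

Definition liouvillian d (L : 'M[C]_d -> 'M[C]_d) :=
  is_linear_map L /\
  forall t : R, 0 <= t ->
    completely_positive (expL L t) /\ trace_preserving (expL L t).

Definition unital d (L : 'M[C]_d -> 'M[C]_d) := L 1%:M = 0.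

Definition reversible d (L : 'M[C]_d -> 'M[C]_d) :=
  forall X Y : 'M[C]_d, hs_inner X (L Y) = hs_inner (L X) Y.

Definition unitary d (U : 'M[C]_d) :=
  adjmx U *m U = 1%:M /\ U *m adjmx U = 1%:M.

Definition ac_unitary_eigenbasis d (G : finZmodType) (L : 'M[C]_d -> 'M[C]_d)
  (U : G -> 'M[C]_d) (lam : G -> C) :=
  [/\ #|G| = (d * d)%N /\ U 0 = 1%:M,
      (forall i, unitary (U i)),
      (forall i, L (U i) = lam i *: U i),
      (forall i j, hs_inner (U i) (U j) = (d%:R * (i == j)%:R)) &
      (exists phi phi' : G -> G -> C,
        forall i j, `|phi i j| = 1 /\ `|phi' i j| = 1 /\
          U i *m U j = phi i j *: (U j *m U i) /\
          U i *m U j = phi' i j *: U (i + j))].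

(* normalized Schatten norms on M_D w.r.t. 1/D, for p = 2, 4:
   tr|Y|^2 = tr(Y^* Y), tr|Y|^4 = tr((Y^* Y)^2) *)
Definition qnorm2 D (Y : 'M[C]_D) : R :=
  ((D%:R)^-1 * complex.Re (\tr (adjmx Y *m Y))) `^ (2^-1).
Definition qnorm4 D (Y : 'M[C]_D) : R :=
  ((D%:R)^-1 * complex.Re (\tr ((adjmx Y *m Y) *m (adjmx Y *m Y)))) `^ (4^-1).

Definition qnorm24 D (S : 'M[C]_D -> 'M[C]_D) : \bar R :=
  ereal_sup [set ((qnorm4 (S X) / qnorm2 X)%:E)%E | X in [set X : 'M[C]_D | X != 0]].

Definition is_character (G : finZmodType) (f : G -> C) :=
  (forall g h, f (g + h) = f g * f h) /\ (forall g, f g != 0).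

Definition character_iso (G : finZmodType) (chi : G -> G -> C) :=
  [/\ (forall i, is_character (chi i)),
      (forall i j g, chi (i + j) g = chi i g * chi j g),
      (forall i j, (forall g, chi i g = chi j g) -> i = j) &
      (forall f, is_character f -> exists i, forall g, chi i g = f g)].

Definition fourier (G : finZmodType) (chi : G -> G -> C) (f : G -> C) (i : G) : C :=
  (#|G|%:R)^-1 * \sum_(g : G) conjc (chi i g) * f g.

Definition classical_sg (G : finZmodType) (chi : G -> G -> C) (lam : G -> C)
  (t : R) (f : G -> C) : G -> C :=
  fun g => \sum_(i : G) cexp (lam i * t%:C) * fourier chi f i * chi i g.

(* A (x) B on V(G1) (x) V(G2) = V(G1 x G2) *)
Definition ctens (G1 G2 : finType) (A : (G1 -> C) -> G1 -> C) (B : (G2 -> C) -> G2 -> C)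
  (f : G1 * G2 -> C) : G1 * G2 -> C :=
  fun g => \sum_(h1 : G1) \sum_(h2 : G2)
    f (h1, h2) * A (fun x => (x == h1)%:R) g.1 * B (fun x => (x == h2)%:R) g.2.

Definition cnorm (G : finType) (p : nat) (f : G -> C) : R :=
  ((#|G|%:R)^-1 * \sum_(g : G) complex.Re (`|f g| ^+ p)) `^ (p%:R^-1).

Definition cnorm24 (G : finType) (A : (G -> C) -> G -> C) : \bar R :=
  ereal_sup [set ((cnorm 4 (A f) / cnorm 2 f)%:E)%E
            | f in [set f : G -> C | f <> (fun=> 0)]].

End QuantumDefs.

(* Write X in the orthogonal basis W_k = U1_k1 (x) U2_k2 of M_(d1 d2), with
   coefficients x_k = <W_k, X> / (d1 d2). Reversibility makes the eigenvalues
   real, so e^{tL1} (x) e^{tL2} multiplies x_k by e_k = e^{(lam1_k1 + lam2_k2) t},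
   and so does P_t^1 (x) P_t^2 on the product character chi_k. Compare X with
   f = sum_k |x_k| chi_k. By Bessel ||f||_2 = ||x||_2 <= ||X||_2. The almost
   commutation relations give |tr(W_a^* W_b W_c^* W_e)| = D [b - a + e - c = 0],
   hence ||Y||_4^4 <= sum_{b-a+e-c=0} |y_a y_b y_c y_e| for Y = sum_k y_k W_k;
   for Y the image of X this sum is exactly ||(P_t^1 (x) P_t^2) f||_4^4, by
   orthogonality of characters. So each quantum ratio is dominated by a
   classical one. *)

From HB Require Import structures.
From mathcomp Require Import all_boot all_order all_algebra.
From mathcomp Require Import all_classical all_reals all_analysis.
From mathcomp Require Import complex mxtens ring.
Import Order.TTheory GRing.Theory Num.Theory.
Import numFieldNormedType.Exports.
Set Implicit Arguments. Unset Strict Implicit. Unset Printing Implicit Defensive.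
Local Open Scope ring_scope.
Local Open Scope complex_scope.
Local Open Scope classical_set_scope.

Lemma sum_mxtens_index (V : nmodType) m n (F : 'I_(m * n) -> V) :
  \sum_k F k = \sum_(a < m) \sum_(c < n) F (mxtens_index (a, c)).
Proof.
rewrite pair_big /= (reindex (@mxtens_index m n)) /=.
  by apply: eq_bigr => -[a c] _.
by exists (@mxtens_unindex m n) => x _; rewrite (mxtens_indexK, mxtens_unindexK).
Qed.

Section MatrixAdjoint.
Variable R : realType.
Local Notation C := R[i].

Lemma adjmxM m n p (A : 'M[C]_(m, n)) (B : 'M[C]_(n, p)) :
  adjmx (A *m B) = adjmx B *m adjmx A.
Proof. by rewrite /adjmx map_mxM trmx_mul. Qed.

Lemma adjmxK m n (A : 'M[C]_(m, n)) : adjmx (adjmx A) = A.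
Proof. by apply/matrixP => i j; rewrite !mxE conjcK. Qed.

Lemma adjmxZ m n (a : C) (A : 'M[C]_(m, n)) : adjmx (a *: A) = a^* *: adjmx A.
Proof. by apply/matrixP => i j; rewrite !mxE rmorphM. Qed.

Lemma adjmxD m n (A B : 'M[C]_(m, n)) : adjmx (A + B) = adjmx A + adjmx B.
Proof. by apply/matrixP => i j; rewrite !mxE rmorphD. Qed.

Lemma adjmx_sum m n (I : finType) (F : I -> 'M[C]_(m, n)) :
  adjmx (\sum_i F i) = \sum_i adjmx (F i).
Proof.
apply/matrixP => i j; rewrite !mxE !summxE rmorph_sum.
by apply: eq_bigr => k _; rewrite !mxE.
Qed.

Lemma adjmx1 n : adjmx (1%:M : 'M[C]_n) = 1%:M.
Proof. by apply/matrixP => i j; rewrite !mxE conjc_nat eq_sym. Qed.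

Lemma adjmx_tens m n p q (A : 'M[C]_(m, n)) (B : 'M[C]_(p, q)) :
  adjmx (A *t B) = adjmx A *t adjmx B.
Proof. by apply/matrixP => i j; rewrite !mxE rmorphM. Qed.

Lemma mxtrace_tens m n (A : 'M[C]_m) (B : 'M[C]_n) : \tr (A *t B) = \tr A * \tr B.
Proof. by rewrite /mxtrace mulr_sum; apply: eq_bigr => k _; rewrite !mxE. Qed.

Lemma tensmxZl m n p q (a : C) (A : 'M[C]_(m, n)) (B : 'M[C]_(p, q)) :
  (a *: A) *t B = a *: (A *t B).
Proof. by apply/matrixP => i j; rewrite !mxE mulrA. Qed.

Lemma tensmxZr m n p q (a : C) (A : 'M[C]_(m, n)) (B : 'M[C]_(p, q)) :
  A *t (a *: B) = a *: (A *t B).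
Proof. by apply/matrixP => i j; rewrite !mxE mulrCA. Qed.

Lemma tensmx_suml m n p q (I : finType) (F : I -> 'M[C]_(m, n)) (B : 'M[C]_(p, q)) :
  (\sum_i F i) *t B = \sum_i (F i *t B).
Proof.
apply/matrixP => i j; rewrite !mxE !summxE mulr_suml.
by apply: eq_bigr => k _; rewrite !mxE.
Qed.

Lemma tensmx_sumr m n p q (I : finType) (A : 'M[C]_(m, n)) (F : I -> 'M[C]_(p, q)) :
  A *t (\sum_i F i) = \sum_i (A *t F i).
Proof.
apply/matrixP => i j; rewrite !mxE !summxE mulr_sumr.
by apply: eq_bigr => k _; rewrite !mxE.
Qed.

End MatrixAdjoint.

Section HilbertSchmidt.
Variable R : realType.
Local Notation C := R[i].

Lemma hs_innerE d (A B : 'M[C]_d) :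
  hs_inner A B = \sum_i \sum_j (A i j)^* * B i j.
Proof.
rewrite /hs_inner /mxtrace exchange_big; apply: eq_bigr => j _.
by rewrite mxE; apply: eq_bigr => i _; rewrite !mxE.
Qed.

Lemma hs_innerC d (A B : 'M[C]_d) : (hs_inner A B)^* = hs_inner B A.
Proof.
rewrite !hs_innerE rmorph_sum; apply: eq_bigr => i _.
rewrite rmorph_sum; apply: eq_bigr => j _.
by rewrite rmorphM /= conjcK mulrC.
Qed.

Lemma hs_innerZr d (A B : 'M[C]_d) (a : C) : hs_inner A (a *: B) = a * hs_inner A B.
Proof. by rewrite /hs_inner -scalemxAr mxtraceZ. Qed.

Lemma hs_innerZl d (A B : 'M[C]_d) (a : C) : hs_inner (a *: A) B = a^* * hs_inner A B.
Proof. by rewrite /hs_inner adjmxZ -scalemxAl mxtraceZ. Qed.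

Lemma hs_innerDl d (A B X : 'M[C]_d) : hs_inner (A + B) X = hs_inner A X + hs_inner B X.
Proof. by rewrite /hs_inner adjmxD mulmxDl mxtraceD. Qed.

Lemma hs_innerDr d (A B X : 'M[C]_d) : hs_inner X (A + B) = hs_inner X A + hs_inner X B.
Proof. by rewrite /hs_inner mulmxDr mxtraceD. Qed.

Lemma hs_innerNl d (A X : 'M[C]_d) : hs_inner (- A) X = - hs_inner A X.
Proof. by rewrite -scaleN1r hs_innerZl rmorphN1 mulN1r. Qed.

Lemma hs_innerNr d (A X : 'M[C]_d) : hs_inner X (- A) = - hs_inner X A.
Proof. by rewrite -scaleN1r hs_innerZr mulN1r. Qed.

Lemma hs_inner_sumr d (I : finType) (A : 'M[C]_d) (c : I -> C) (F : I -> 'M[C]_d) :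
  hs_inner A (\sum_i c i *: F i) = \sum_i c i * hs_inner A (F i).
Proof.
rewrite /hs_inner mulmx_sumr raddf_sum; apply: eq_bigr => i _.
by rewrite /= -scalemxAr mxtraceZ.
Qed.

Lemma hs_inner_suml d (I : finType) (A : 'M[C]_d) (c : I -> C) (F : I -> 'M[C]_d) :
  hs_inner (\sum_i c i *: F i) A = \sum_i (c i)^* * hs_inner (F i) A.
Proof.
rewrite -hs_innerC hs_inner_sumr rmorph_sum; apply: eq_bigr => i _.
by rewrite rmorphM /= hs_innerC.
Qed.

Lemma hs_inner_ge0 d (A : 'M[C]_d) : 0 <= hs_inner A A.
Proof.
rewrite hs_innerE; apply: sumr_ge0 => i _; apply: sumr_ge0 => j _.
by rewrite mulrC mulcJ_ge0.
Qed.

Lemma hs_inner_tens m n (A B : 'M[C]_m) (A' B' : 'M[C]_n) :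
  hs_inner (A *t A') (B *t B') = hs_inner A B * hs_inner A' B'.
Proof. by rewrite /hs_inner adjmx_tens tensmx_mul mxtrace_tens. Qed.

End HilbertSchmidt.

Section ComplexParts.
Variable R : realType.
Local Notation C := R[i].

Lemma Re_sum (I : Type) (r : seq I) (P : pred I) (F : I -> C) :
  complex.Re (\sum_(i <- r | P i) F i) = \sum_(i <- r | P i) complex.Re (F i).
Proof.
elim: r => [|x r IH]; rewrite ?big_nil ?big_cons //; case: (P x) => //.
by rewrite -IH; case: (F x) => ? ?; case: (\sum_(j <- r | P j) F j).
Qed.

Lemma Im_sum (I : Type) (r : seq I) (P : pred I) (F : I -> C) :
  complex.Im (\sum_(i <- r | P i) F i) = \sum_(i <- r | P i) complex.Im (F i).
Proof.
elim: r => [|x r IH]; rewrite ?big_nil ?big_cons //; case: (P x) => //.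
by rewrite -IH; case: (F x) => ? ?; case: (\sum_(j <- r | P j) F j).
Qed.

Lemma ReMr_real (z : C) (a : R) : complex.Re (z * a%:C) = complex.Re z * a.
Proof. by case: z => x y /=; rewrite !mulr0 subr0. Qed.

Lemma ImMr_real (z : C) (a : R) : complex.Im (z * a%:C) = complex.Im z * a.
Proof. by case: z => x y /=; rewrite !mulr0 add0r. Qed.

Lemma Re_natrM n (z : C) : complex.Re (n%:R * z) = n%:R * complex.Re z.
Proof.
have -> : (n%:R : C) = (n%:R)%:C by rewrite rmorph_nat.
by rewrite mulrC ReMr_real mulrC.
Qed.

Lemma Re_ler (z w : C) : z <= w -> complex.Re z <= complex.Re w.
Proof. by rewrite lecE => /andP[]. Qed.

Lemma Re_ltr (z w : C) : z < w -> complex.Re z < complex.Re w.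
Proof. by rewrite ltcE => /andP[]. Qed.

Lemma Re_le_norm (z : C) : complex.Re z <= complex.Re `|z|.
Proof.
apply: le_trans (real_ler_norm _) _; first exact: num_real.
exact: Re_ler (normc_ge_Re z).
Qed.

End ComplexParts.

Definition quartic_form (R : realType) (G : finZmodType) (z : G -> R[i]) : R[i] :=
  \sum_a \sum_b \sum_c \sum_e
     ((b - a + (e - c) == 0)%:R * ((z a)^* * z b * ((z c)^* * z e))).

Lemma ler_norm_sum4 (R : realType) (I J K M : finType) (F : I -> J -> K -> M -> R[i]) :
  `|\sum_a \sum_b \sum_c \sum_e F a b c e| <=
    \sum_a \sum_b \sum_c \sum_e `|F a b c e|.
Proof.
apply: le_trans (ler_norm_sum _ _ _) _; apply: ler_sum => a _.
apply: le_trans (ler_norm_sum _ _ _) _; apply: ler_sum => b _.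
apply: le_trans (ler_norm_sum _ _ _) _; apply: ler_sum => c _.
exact: ler_norm_sum.
Qed.

Section OrthogonalFamily.
Variables (R : realType) (D : nat) (G : finZmodType) (W : G -> 'M[R[i]]_D).
Local Notation C := R[i].
Hypothesis D_gt0 : (0 < D)%N.
Hypothesis W_orth : forall a b, hs_inner (W a) (W b) = D%:R * (a == b)%:R.
Hypothesis W_trace4 : forall a b c e,
  `|\tr (adjmx (W a) *m W b *m (adjmx (W c) *m W e))| <=
    D%:R * (b - a + (e - c) == 0)%:R.

Let D_neq0 : (D%:R : C) != 0. Proof. by rewrite pnatr_eq0 -lt0n. Qed.

Lemma bessel X : D%:R * \sum_k `|hs_inner (W k) X / D%:R| ^+ 2 <= hs_inner X X.
Proof.
set x := fun k => hs_inner (W k) X / D%:R.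
have Wx k : hs_inner (W k) X = D%:R * x k by rewrite /x mulrC divfK.
set S := \sum_k x k *: W k.
have XS : hs_inner X S = D%:R * \sum_k `|x k| ^+ 2.
  rewrite hs_inner_sumr mulr_sumr; apply: eq_bigr => k _.
  by rewrite -hs_innerC Wx rmorphM /= conjc_nat sqr_normc mulrCA.
have SX : hs_inner S X = D%:R * \sum_k `|x k| ^+ 2.
  rewrite hs_inner_suml mulr_sumr; apply: eq_bigr => k _.
  by rewrite Wx sqr_normc; ring.
have SS : hs_inner S S = D%:R * \sum_k `|x k| ^+ 2.
  rewrite hs_inner_suml mulr_sumr; apply: eq_bigr => k _.
  rewrite hs_inner_sumr (bigD1 k) //= big1 => [|l /negbTE lk]; last first.
    by rewrite W_orth eq_sym lk !mulr0.
  by rewrite W_orth eqxx addr0 mulr1 sqr_normc; ring.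
have := hs_inner_ge0 (X - S).
by rewrite hs_innerDl !hs_innerDr !hs_innerNl !hs_innerNr XS SX SS opprK addNr addr0 subr_ge0.
Qed.

Lemma norm_mxtrace_gram_sqr (y : G -> C) (Y := \sum_k y k *: W k) :
  `|\tr ((adjmx Y *m Y) *m (adjmx Y *m Y))| <=
    D%:R * quartic_form (fun k => `|y k|).
Proof.
have gramY : adjmx Y *m Y = \sum_a \sum_b ((y a)^* * y b) *: (adjmx (W a) *m W b).
  rewrite /Y adjmx_sum mulmx_suml; apply: eq_bigr => a _.
  rewrite mulmx_sumr; apply: eq_bigr => b _.
  by rewrite adjmxZ -scalemxAl -scalemxAr scalerA.
rewrite gramY mulmx_suml raddf_sum.
under eq_bigr do rewrite mulmx_suml raddf_sum.
under eq_bigr do under eq_bigr do rewrite mulmx_sumr raddf_sum.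
under eq_bigr do under eq_bigr do under eq_bigr do rewrite mulmx_sumr raddf_sum.
apply: le_trans (ler_norm_sum4 _) _.
rewrite mulr_sumr; apply: ler_sum => a _; rewrite mulr_sumr; apply: ler_sum => b _.
rewrite mulr_sumr; apply: ler_sum => c _; rewrite mulr_sumr; apply: ler_sum => e _.
rewrite -scalemxAl -scalemxAr scalerA /= mxtraceZ normrM !normrM !normcJ !conj_normC.
rewrite [X in X <= _]mulrC [X in _ <= X]mulrA; apply: ler_wpM2r; first by rewrite !mulr_ge0.
exact: W_trace4.
Qed.

Lemma qnorm2_ge_coef X :
  (complex.Re (\sum_k `|hs_inner (W k) X / D%:R| ^+ 2)) `^ 2^-1 <= qnorm2 X.
Proof.
set s := \sum_k _.
have D_gt0R : 0 < (D%:R : R) by rewrite ltr0n.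
have s_ge0 : 0 <= complex.Re s.
  by apply: (Re_ler (z := 0)); apply: sumr_ge0 => k _; rewrite exprn_ge0.
have s_le : D%:R * complex.Re s <= complex.Re (hs_inner X X).
  by rewrite -Re_natrM; apply: Re_ler; apply: bessel.
apply: ge0_ler_powR; rewrite ?nnegrE ?mulr_ge0 ?invr_ge0 ?ler0n //.
  by apply: (Re_ler (z := 0)); apply: hs_inner_ge0.
by rewrite ler_pdivlMl.
Qed.

Lemma qnorm4_sum_le (y : G -> C) :
  qnorm4 (\sum_k y k *: W k) <=
    (complex.Re (quartic_form (fun k => `|y k|))) `^ 4^-1.
Proof.
set Y := \sum_k y k *: W k; set q := quartic_form _.
have D_gt0R : 0 < (D%:R : R) by rewrite ltr0n.
have tr_ge0 : 0 <= complex.Re (\tr ((adjmx Y *m Y) *m (adjmx Y *m Y))).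
  apply: (Re_ler (z := 0)); have := hs_inner_ge0 (adjmx Y *m Y).
  by rewrite /hs_inner adjmxM adjmxK.
have tr_le : complex.Re (\tr ((adjmx Y *m Y) *m (adjmx Y *m Y))) <= D%:R * complex.Re q.
  by rewrite -Re_natrM; apply: le_trans (Re_le_norm _) (Re_ler _); apply: norm_mxtrace_gram_sqr.
have q_ge0 : 0 <= complex.Re q.
  by rewrite -(pmulr_rge0 _ D_gt0R); apply: le_trans tr_le.
apply: ge0_ler_powR; rewrite ?nnegrE ?mulr_ge0 ?invr_ge0 ?ler0n //.
by rewrite ler_pdivrMl.
Qed.

End OrthogonalFamily.

#[warning="-redundant-canonical-projection"]
HB.instance Definition _ (G1 G2 : finZmodType) := GRing.Zmodule.on (G1 * G2)%type.

Lemma sumr_mul_eq (V : comPzRingType) (G : finType) (f : G -> V) (a : G) :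
  \sum_b f b * (b == a)%:R = f a.
Proof.
rewrite (bigD1 a) //= eqxx mulr1 big1 ?addr0 // => b /negbTE ->.
by rewrite mulr0.
Qed.

Lemma sum_pair (V : nmodType) (I J : finType) (F : I * J -> V) :
  \sum_p F p = \sum_i \sum_j F (i, j).
Proof. by rewrite pair_big; apply: eq_bigr => -[]. Qed.

Section Characters.
Variables (R : realType) (G : finZmodType) (chi : G -> G -> R[i]).
Hypothesis chiP : character_iso chi.

Lemma char_addl k l g : chi (k + l) g = chi k g * chi l g.
Proof. by case: chiP. Qed.

Lemma char_addr k g h : chi k (g + h) = chi k g * chi k h.
Proof. by case: chiP => chi_char _ _ _; case: (chi_char k). Qed.

Lemma char_neq0 k g : chi k g != 0.
Proof. by case: chiP => chi_char _ _ _; case: (chi_char k). Qed.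

Lemma char0l g : chi 0 g = 1.
Proof.
have := char_addl 0 0 g; rewrite addr0 => chi00.
by apply: (mulfI (char_neq0 0 g)); rewrite -chi00 mulr1.
Qed.

Lemma norm_char k g : `|chi k g| = 1.
Proof.
have prod_shift : \prod_h chi k h = (\prod_h chi k h) * chi k g ^+ #|G|.
  rewrite {1}(reindex_inj (addIr g)) /=.
  under eq_bigr do rewrite char_addr.
  by rewrite big_split /= prodr_const.
have prod_neq0 : \prod_h chi k h != 0 by apply/prodf_neq0 => h _; exact: char_neq0.
have chiX : chi k g ^+ #|G| = 1 by apply: (mulfI prod_neq0); rewrite mulr1 -prod_shift.
have G_gt0 : (0 < #|G|)%N by apply/card_gt0P; exists 0.
by apply/eqP; rewrite -(pexpr_eq1 G_gt0 (normr_ge0 _)) -normrX chiX normr1.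
Qed.

Lemma conj_char k g : (chi k g)^* = chi (- k) g.
Proof.
apply: (mulIf (char_neq0 k g)).
by rewrite -char_addl addNr char0l mulrC -sqr_normc norm_char expr1n.
Qed.

Lemma sum_char k : \sum_g chi k g = #|G|%:R * (k == 0)%:R.
Proof.
have [->|k_neq0] := eqVneq k 0.
  by under eq_bigr do rewrite char0l; rewrite sumr_const mulr1.
have [h chikh] : exists h, chi k h != 1.
  apply/existsP; apply: contra_neqT k_neq0 => /existsPn chik1.
  by case: chiP => _ _ chi_inj _; apply: chi_inj => g; rewrite char0l; apply/eqP/negPn.
have shift : \sum_g chi k g = chi k h * \sum_g chi k g.
  rewrite {1}(reindex_inj (addIr h)) /= mulr_sumr; apply: eq_bigr => g _.
  by rewrite char_addr mulrC.
apply/eqP; rewrite mulr0; have : (1 - chi k h) * \sum_g chi k g == 0.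
  by rewrite mulrBl mul1r -shift subrr.
by rewrite mulf_eq0 subr_eq0 eq_sym (negbTE chikh).
Qed.

End Characters.

Section ProductCharacters.
Variables (R : realType) (G1 G2 : finZmodType).
Variables (chi1 : G1 -> G1 -> R[i]) (chi2 : G2 -> G2 -> R[i]).

Definition prod_char (k g : G1 * G2) : R[i] := chi1 k.1 g.1 * chi2 k.2 g.2.

Hypotheses (chi1P : character_iso chi1) (chi2P : character_iso chi2).

Lemma prod_char_addl k l g : prod_char (k + l) g = prod_char k g * prod_char l g.
Proof. by rewrite /prod_char !char_addl //; ring. Qed.

Lemma conj_prod_char k g : (prod_char k g)^* = prod_char (- k) g.
Proof. by rewrite /prod_char rmorphM /= !conj_char. Qed.

Lemma sum_prod_char k : \sum_g prod_char k g = #|{: G1 * G2}|%:R * (k == 0)%:R.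
Proof.
rewrite sum_pair card_prod natrM /prod_char /=.
under eq_bigr do rewrite -mulr_sumr.
rewrite -mulr_suml !sum_char //; case: k => k1 k2; rewrite /= xpair_eqE.
by case: (k1 == 0); case: (k2 == 0); rewrite /= ?mulr1 ?mulr0 ?mul0r //; ring.
Qed.

End ProductCharacters.

Definition fourier_synthesis (R : realType) (G : finType) (chi : G -> G -> R[i])
  (z : G -> R[i]) (g : G) : R[i] := \sum_k z k * chi k g.

Section FourierSynthesis.
Variables (R : realType) (G : finZmodType) (chi : G -> G -> R[i]).
Local Notation C := R[i].
Local Notation F := (fourier_synthesis chi).
Hypothesis chi_addl : forall k l g, chi (k + l) g = chi k g * chi l g.
Hypothesis conj_chi : forall k g, (chi k g)^* = chi (- k) g.
Hypothesis sum_chi : forall k, \sum_g chi k g = #|G|%:R * (k == 0)%:R.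

Lemma sqr_norm_fourier_synthesis (z : G -> C) g :
  `|F z g| ^+ 2 = \sum_a \sum_b ((z a)^* * z b) * chi (b - a) g.
Proof.
rewrite sqr_normc mulrC rmorph_sum mulr_suml; apply: eq_bigr => a _.
rewrite mulr_sumr; apply: eq_bigr => b _.
by rewrite rmorphM /= conj_chi [b - a]addrC chi_addl; ring.
Qed.

Lemma sum_sqr_norm_fourier_synthesis (z : G -> C) :
  \sum_g `|F z g| ^+ 2 = #|G|%:R * \sum_k `|z k| ^+ 2.
Proof.
under eq_bigr do rewrite sqr_norm_fourier_synthesis.
rewrite exchange_big mulr_sumr; apply: eq_bigr => a _.
rewrite exchange_big /=.
under eq_bigr do rewrite -mulr_sumr sum_chi subr_eq0 mulrA.
by rewrite sumr_mul_eq sqr_normc; ring.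
Qed.

Lemma sum_norm4_fourier_synthesis (z : G -> C) :
  \sum_g `|F z g| ^+ 4 = #|G|%:R * quartic_form z.
Proof.
have norm4 g : `|F z g| ^+ 4 = \sum_a \sum_b \sum_c \sum_e
    ((z a)^* * z b * ((z c)^* * z e)) * chi (b - a + (e - c)) g.
  rewrite (_ : 4 = 2 * 2)%N // exprM sqr_norm_fourier_synthesis expr2 mulr_suml.
  apply: eq_bigr => a _; rewrite mulr_suml; apply: eq_bigr => b _.
  rewrite mulr_sumr; apply: eq_bigr => c _; rewrite mulr_sumr; apply: eq_bigr => e _.
  by rewrite (chi_addl (b - a)); ring.
under eq_bigr do rewrite norm4.
rewrite exchange_big mulr_sumr; apply: eq_bigr => a _.
rewrite exchange_big mulr_sumr; apply: eq_bigr => b _.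
rewrite exchange_big mulr_sumr; apply: eq_bigr => c _.
rewrite exchange_big mulr_sumr; apply: eq_bigr => e _.
by rewrite -mulr_sumr sum_chi; ring.
Qed.

Lemma fourier_synthesis_coef (z : G -> C) k :
  \sum_g F z g * chi (- k) g = #|G|%:R * z k.
Proof.
under eq_bigr do rewrite mulr_suml.
rewrite exchange_big /=.
under eq_bigr do (under eq_bigr do rewrite -mulrA -chi_addl;
  rewrite -mulr_sumr sum_chi subr_eq0 mulrCA).
by rewrite -mulr_sumr sumr_mul_eq.
Qed.

End FourierSynthesis.

Lemma cvg_sum_series_exp (R : realType) (I : finType) (a r : I -> R) :
  (fun N => \sum_i a i * series (exp_coeff (r i)) N) @ \oo -->
    \sum_i a i * expR (r i).
Proof.
apply: (cvg_big (@add_continuous R)) => i _.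
by apply: cvgMl_tmp; exact: is_cvg_series_exp_coeff.
Qed.

Section Eigenbasis.
Variables (R : realType) (d : nat) (G : finZmodType).
Local Notation C := R[i].
Variables (L : 'M[C]_d -> 'M[C]_d) (U : G -> 'M[C]_d) (lam : G -> C).
Hypothesis UP : ac_unitary_eigenbasis L U lam.

Lemma eigenbasis_eigen i : L (U i) = lam i *: U i.
Proof. by case: UP. Qed.

Lemma eigenbasis_orth i j : hs_inner (U i) (U j) = d%:R * (i == j)%:R.
Proof. by case: UP. Qed.

Lemma eigenbasis_dim_gt0 : (0 < d)%N.
Proof.
have : (0 < #|G|)%N by apply/card_gt0P; exists 0.
by case: UP => -[-> _] _ _ _ _; rewrite muln_gt0 andbb.
Qed.

Let d_neq0 : (d%:R : C) != 0.
Proof. by rewrite pnatr_eq0 -lt0n eigenbasis_dim_gt0. Qed.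

Lemma mxtrace_eigenbasis k : \tr (U k) = d%:R * (k == 0)%:R.
Proof.
have := eigenbasis_orth 0 k; case: UP => -[_ ->] _ _ _ _.
by rewrite /hs_inner adjmx1 mul1mx eq_sym.
Qed.

Lemma eigenbasis_mul a b : exists2 p : C, `|p| = 1 & U a *m U b = p *: U (a + b).
Proof. by case: UP => _ _ _ _ [phi [phi' /(_ a b) [_ [? [_ ?]]]]]; exists (phi' a b). Qed.

Lemma eigenbasis_adjmul a b :
  exists2 p : C, `|p| = 1 & adjmx (U a) *m U b = p *: U (b - a).
Proof.
have [p p1 Uab] := eigenbasis_mul a (b - a); rewrite [a + _]addrC subrK in Uab.
have p_neq0 : p != 0 by rewrite -normr_eq0 p1 oner_eq0.
exists p^-1; first by rewrite normfV p1 invr1.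
case: UP => _ /(_ a) [Ua_unitary _] _ _ _.
have := congr1 (mulmx (adjmx (U a))) Uab.
by rewrite mulmxA Ua_unitary mul1mx -scalemxAr => ->; rewrite scalerA mulVf ?scale1r.
Qed.

Lemma norm_mxtrace_eigenbasis4 a b c e :
  `|\tr (adjmx (U a) *m U b *m (adjmx (U c) *m U e))| =
    d%:R * (b - a + (e - c) == 0)%:R.
Proof.
have [p p1 ->] := eigenbasis_adjmul a b; have [q q1 ->] := eigenbasis_adjmul c e.
rewrite -scalemxAl -scalemxAr; have [r r1 ->] := eigenbasis_mul (b - a) (e - c).
rewrite !mxtraceZ mxtrace_eigenbasis !normrM p1 q1 r1 !mul1r normr_nat.
by case: eqP; rewrite ?normr1 ?normr0.
Qed.

(* The matrix of the coefficients (U x a b)_{x,(a,b)} is d^2 x d^2 with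
   orthogonal rows of norm d, hence also with orthogonal columns. *)
Lemma eigenbasis_complete a b c e :
  \sum_x (U x a b)^* * U x c e = d%:R * ((a == c) && (b == e))%:R.
Proof.
pose n := (d * d)%N; have cardG : #|G| = n by case: UP => -[].
pose g (k : 'I_n) : G := enum_val (cast_ord (esym cardG) k).
pose h (x : G) : 'I_n := cast_ord cardG (enum_rank x).
have gK : cancel g h by move=> k; rewrite /g /h enum_valK cast_ordKV.
have hK : cancel h g by move=> x; rewrite /g /h cast_ordK enum_rankK.
pose M : 'M[C]_n := \matrix_(k, p) U (g k) (mxtens_unindex p).1 (mxtens_unindex p).2.
have M_unitary : M *m ((d%:R)^-1 *: adjmx M) = 1%:M.
  apply/matrixP => k l; rewrite -scalemxAr !mxE.
  transitivity ((d%:R)^-1 * hs_inner (U (g l)) (U (g k))).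
    rewrite hs_innerE sum_mxtens_index /=; congr (_ * _).
    apply: eq_bigr => a' _; apply: eq_bigr => c' _.
    by rewrite !mxE mxtens_indexK mulrC.
  rewrite eigenbasis_orth (inj_eq (can_inj gK)) mulrA mulVf ?mul1r //.
  by rewrite eq_sym.
have := congr1 (fun A : 'M[C]_n => A (mxtens_index (a, b)) (mxtens_index (c, e)))
  (mulmx1C M_unitary).
rewrite /= -scalemxAl !mxE (inj_eq (can_inj (@mxtens_indexK d d))) xpair_eqE.
move=> <-; rewrite mulrA mulfV ?mul1r //.
rewrite (reindex g) /=; last by exists h => x _; rewrite (gK, hK).
by apply: eq_bigr => k _; rewrite !mxE !mxtens_indexK.
Qed.

Lemma delta_mx_expansion a b :
  delta_mx a b = \sum_x ((d%:R)^-1 * (U x a b)^*) *: U x.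
Proof.
apply/matrixP => c e; rewrite summxE mxE.
under eq_bigr do rewrite mxE -mulrA.
by rewrite -mulr_sumr eigenbasis_complete mulrA mulVf ?mul1r // (eq_sym a) (eq_sym b).
Qed.

Hypothesis L_reversible : reversible L.

Lemma eigenvalue_real i : lam i = (complex.Re (lam i))%:C.
Proof.
apply/esym/RRe_real; rewrite CrealE; apply/eqP/(mulIf d_neq0).
have := L_reversible (U i) (U i).
by rewrite eigenbasis_eigen hs_innerZr hs_innerZl eigenbasis_orth eqxx mulr1.
Qed.

Hypothesis L_liouvillian : liouvillian L.

Lemma liouvillian_expansion (c : G -> C) :
  L (\sum_x c x *: U x) = \sum_x (c x * lam x) *: U x.
Proof.
case: L_liouvillian => L_linear _.
have L0 : L 0 = 0.
  have := L_linear 1 0 0; rewrite !scale1r !addr0 => L00.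
  by apply: (addrI (L 0)); rewrite addr0 -L00.
elim/big_rec2: _ => [|x A B _ <-] //.
by rewrite L_linear eigenbasis_eigen scalerA.
Qed.

Lemma exp_partial_expansion t N (c : G -> C) :
  exp_partial L t N (\sum_x c x *: U x) =
    \sum_x (c x * (series (exp_coeff (complex.Re (lam x) * t)) N)%:C) *: U x.
Proof.
have iterL k : iter k L (\sum_x c x *: U x) = \sum_x (c x * lam x ^+ k) *: U x.
  elim: k => [|k IH] /=; first by apply: eq_bigr => x _; rewrite mulr1.
  by rewrite IH liouvillian_expansion; apply: eq_bigr => x _; rewrite exprSr mulrA.
rewrite /exp_partial; under eq_bigr do rewrite iterL scaler_sumr.
rewrite exchange_big /=; apply: eq_bigr => x _.
under eq_bigr do rewrite scalerA.
rewrite -scaler_suml; congr (_ *: _).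
rewrite /series /= big_mkord rmorph_sum mulr_sumr; apply: eq_bigr => k _.
rewrite [lam x]eigenvalue_real /exp_coeff -rmorphXn mulrCA -!rmorphM /=.
by congr (_ * _%:C); rewrite exprMn; ring.
Qed.

Lemma expL_expansion t (c : G -> C) :
  expL L t (\sum_x c x *: U x) =
    \sum_x (c x * (expR (complex.Re (lam x) * t))%:C) *: U x.
Proof.
apply/matrixP => i j; rewrite mxE summxE.
under [in RHS]eq_bigr do rewrite mxE.
set r := fun x => complex.Re (lam x) * t.
have ReE : (fun N => complex.Re (exp_partial L t N (\sum_x c x *: U x) i j)) =
    (fun N => \sum_x complex.Re (c x * U x i j) * series (exp_coeff (r x)) N).
  apply: funext => N; rewrite exp_partial_expansion summxE Re_sum.
  by apply: eq_bigr => x _; rewrite mxE mulrAC ReMr_real.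
have ImE : (fun N => complex.Im (exp_partial L t N (\sum_x c x *: U x) i j)) =
    (fun N => \sum_x complex.Im (c x * U x i j) * series (exp_coeff (r x)) N).
  apply: funext => N; rewrite exp_partial_expansion summxE Im_sum.
  by apply: eq_bigr => x _; rewrite mxE mulrAC ImMr_real.
rewrite ReE ImE !(cvg_lim (@Rhausdorff R) (@cvg_sum_series_exp R G _ _)).
apply/eqP; rewrite eq_complex /= Re_sum Im_sum; apply/andP; split; apply/eqP.
  by apply: eq_bigr => x _; rewrite mulrAC ReMr_real.
by apply: eq_bigr => x _; rewrite mulrAC ImMr_real.
Qed.

Lemma expL_delta_mx t a b :
  expL L t (delta_mx a b) =
    \sum_x ((d%:R)^-1 * (U x a b)^* * (expR (complex.Re (lam x) * t))%:C) *: U x.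
Proof. by rewrite delta_mx_expansion expL_expansion. Qed.

End Eigenbasis.

Lemma exchange_big3 (V : nmodType) (I J K : finType) (F : I -> J -> K -> V) :
  \sum_i \sum_j \sum_k F i j k = \sum_j \sum_k \sum_i F i j k.
Proof. by rewrite exchange_big; apply: eq_bigr => j _; exact: exchange_big. Qed.

Section TensorEigenbasis.
Variables (R : realType) (d1 d2 : nat) (G1 G2 : finZmodType).
Local Notation C := R[i].
Variables (L1 : 'M[C]_d1 -> 'M[C]_d1) (U1 : G1 -> 'M[C]_d1) (lam1 : G1 -> C).
Variables (L2 : 'M[C]_d2 -> 'M[C]_d2) (U2 : G2 -> 'M[C]_d2) (lam2 : G2 -> C).

Definition tens_basis (k : G1 * G2) : 'M[C]_(d1 * d2) := U1 k.1 *t U2 k.2.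

Hypotheses (U1P : ac_unitary_eigenbasis L1 U1 lam1)
  (U2P : ac_unitary_eigenbasis L2 U2 lam2).

Lemma tens_basis_orth a b :
  hs_inner (tens_basis a) (tens_basis b) = (d1 * d2)%:R * (a == b)%:R.
Proof.
rewrite hs_inner_tens (eigenbasis_orth U1P) (eigenbasis_orth U2P) natrM.
case: a b => a1 a2 [b1 b2]; rewrite /= xpair_eqE.
by case: (a1 == b1); case: (a2 == b2); rewrite /= ?mulr1 ?mulr0 ?mul0r //; ring.
Qed.

Lemma norm_mxtrace_tens_basis4 a b c e :
  `|\tr (adjmx (tens_basis a) *m tens_basis b *m
         (adjmx (tens_basis c) *m tens_basis e))| <=
    (d1 * d2)%:R * (b - a + (e - c) == 0)%:R.
Proof.
rewrite !adjmx_tens !tensmx_mul mxtrace_tens normrM (norm_mxtrace_eigenbasis4 U1P)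
  (norm_mxtrace_eigenbasis4 U2P) natrM.
case: a b c e => a1 a2 [b1 b2] [c1 c2] [e1 e2]; rewrite /= xpair_eqE.
by case: (_ == 0); case: (_ == 0); rewrite /= ?mulr1 ?mulr0 ?mul0r.
Qed.

Hypotheses (L1_liouvillian : liouvillian L1) (L1_reversible : reversible L1).
Hypotheses (L2_liouvillian : liouvillian L2) (L2_reversible : reversible L2).
Variable t : R.
Local Notation E1 x := (expR (complex.Re (lam1 x) * t))%:C.
Local Notation E2 y := (expR (complex.Re (lam2 y) * t))%:C.

Lemma suptens_expL (X : 'M[C]_(d1 * d2)) :
  suptens (expL L1 t) (expL L2 t) X =
    \sum_k (E1 k.1 * E2 k.2 * (hs_inner (tens_basis k) X / (d1 * d2)%:R))
      *: tens_basis k.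
Proof.
have deltaE a b c e :
    X (mxtens_index (a, c)) (mxtens_index (b, e)) *:
      (expL L1 t (delta_mx a b) *t expL L2 t (delta_mx c e)) =
    \sum_x \sum_y (X (mxtens_index (a, c)) (mxtens_index (b, e)) *
       ((d1%:R)^-1 * (U1 x a b)^* * E1 x) * ((d2%:R)^-1 * (U2 y c e)^* * E2 y))
       *: tens_basis (x, y).
  rewrite (expL_delta_mx U1P L1_reversible L1_liouvillian)
    (expL_delta_mx U2P L2_reversible L2_liouvillian) tensmx_suml scaler_sumr; apply: eq_bigr => x _.
  rewrite tensmx_sumr scaler_sumr; apply: eq_bigr => y _.
  by rewrite tensmxZl tensmxZr !scalerA mulrA.
rewrite /suptens sum_pair.
under eq_bigr do under eq_bigr do under eq_bigr do under eq_bigr do rewrite deltaE.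
under eq_bigr do under eq_bigr do under eq_bigr do rewrite exchange_big3.
under eq_bigr do under eq_bigr do rewrite exchange_big3.
under eq_bigr do rewrite exchange_big3.
rewrite exchange_big3; apply: eq_bigr => x _; apply: eq_bigr => y _.
under eq_bigr do under eq_bigr do under eq_bigr do rewrite -scaler_suml.
under eq_bigr do under eq_bigr do rewrite -scaler_suml.
under eq_bigr do rewrite -scaler_suml.
rewrite -scaler_suml; congr (_ *: _).
rewrite hs_innerE sum_mxtens_index.
under [in RHS]eq_bigr do under eq_bigr do rewrite sum_mxtens_index.
rewrite !mulr_suml !mulr_sumr.
under [in RHS]eq_bigr do rewrite !mulr_suml !mulr_sumr.
under [in RHS]eq_bigr do under eq_bigr do rewrite !mulr_suml !mulr_sumr.
under [in RHS]eq_bigr do under eq_bigr do under eq_bigr do rewrite mulr_suml mulr_sumr.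
under [in RHS]eq_bigr do rewrite exchange_big.
apply: eq_bigr => a _; apply: eq_bigr => b _; apply: eq_bigr => c _; apply: eq_bigr => e _.
by rewrite !mxE !mxtens_indexK /= rmorphM natrM invfM; ring.
Qed.

End TensorEigenbasis.

Lemma cexp_real (R : realType) (r : R) : cexp r%:C = (expR r)%:C.
Proof. by rewrite /cexp /= cos0 sin0 (_ : 1 +i* 0 = 1) ?mulr1. Qed.

Section ClassicalSemigroup.
Variables (R : realType) (G : finZmodType) (chi : G -> G -> R[i]) (lam : G -> R[i]).
Hypothesis lam_real : forall i, lam i = (complex.Re (lam i))%:C.

Lemma classical_sg_indicator t h g :
  classical_sg chi lam t (fun x => (x == h)%:R) g =
    \sum_i (expR (complex.Re (lam i) * t))%:C * ((#|G|%:R)^-1 * (chi i h)^*) * chi i g.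
Proof.
apply: eq_bigr => i _.
by rewrite /fourier sumr_mul_eq lam_real -rmorphM cexp_real -lam_real.
Qed.

End ClassicalSemigroup.

Section ClassicalTensor.
Variables (R : realType) (G1 G2 : finZmodType).
Local Notation C := R[i].
Variables (chi1 : G1 -> G1 -> C) (lam1 : G1 -> C) (chi2 : G2 -> G2 -> C) (lam2 : G2 -> C).
Hypotheses (chi1P : character_iso chi1) (chi2P : character_iso chi2).
Hypothesis lam1_real : forall i, lam1 i = (complex.Re (lam1 i))%:C.
Hypothesis lam2_real : forall i, lam2 i = (complex.Re (lam2 i))%:C.
Variable t : R.
Local Notation E1 i := (expR (complex.Re (lam1 i) * t))%:C.
Local Notation E2 i := (expR (complex.Re (lam2 i) * t))%:C.
Local Notation chi := (prod_char chi1 chi2).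

Lemma ctens_fourier_synthesis (z : G1 * G2 -> C) :
  ctens (classical_sg chi1 lam1 t) (classical_sg chi2 lam2 t) (fourier_synthesis chi z) =
    fourier_synthesis chi (fun k => E1 k.1 * E2 k.2 * z k).
Proof.
apply: funext => g; set f := fourier_synthesis chi z.
have G_neq0 : (#|{: G1 * G2}|%:R : C) != 0.
  by rewrite pnatr_eq0 -lt0n; apply/card_gt0P; exists 0.
have zE k : z k = (#|{: G1 * G2}|%:R)^-1 * \sum_h f h * chi (- k) h.
  by rewrite (fourier_synthesis_coef (prod_char_addl chi1P chi2P)
    (sum_prod_char chi1P chi2P)) mulKf.
have termE h1 h2 :
    f (h1, h2) * classical_sg chi1 lam1 t (fun x => (x == h1)%:R) g.1
      * classical_sg chi2 lam2 t (fun x => (x == h2)%:R) g.2 =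
    \sum_i \sum_j f (h1, h2) * (E1 i * (#|G1|%:R^-1 * (chi1 i h1)^*) * chi1 i g.1)
      * (E2 j * (#|G2|%:R^-1 * (chi2 j h2)^*) * chi2 j g.2).
  rewrite (classical_sg_indicator chi1 lam1_real) (classical_sg_indicator chi2 lam2_real).
  rewrite [f _ * _]mulr_sumr mulr_suml; apply: eq_bigr => i _.
  by rewrite mulr_sumr.
rewrite /ctens; under eq_bigr do under eq_bigr do rewrite termE.
under eq_bigr do rewrite exchange_big3.
rewrite exchange_big3 /fourier_synthesis sum_pair; apply: eq_bigr => i _; apply: eq_bigr => j _.
transitivity (E1 i * E2 j * (#|G1|%:R^-1 * #|G2|%:R^-1) * (chi1 i g.1 * chi2 j g.2) *
  \sum_h1 \sum_h2 f (h1, h2) * (chi1 (- i) h1 * chi2 (- j) h2)).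
  rewrite mulr_sumr; apply: eq_bigr => h1 _; rewrite mulr_sumr; apply: eq_bigr => h2 _.
  by rewrite -(conj_char chi1P) -(conj_char chi2P); ring.
by rewrite zE sum_pair card_prod natrM invfM /prod_char /=; ring.
Qed.

End ClassicalTensor.

Lemma ctens0 (R : realType) (G1 G2 : finType) (A : (G1 -> R[i]) -> G1 -> R[i])
  (B : (G2 -> R[i]) -> G2 -> R[i]) : ctens A B (fun=> 0) = (fun=> 0).
Proof. by apply: funext => g; apply: big1 => h1 _; apply: big1 => h2 _; rewrite !mul0r. Qed.

Section ClassicalNorms.
Variables (R : realType) (G : finType).
Local Notation C := R[i].

Lemma cnorm_eq p (f : G -> C) s : (0 < #|G|)%N ->
  \sum_g `|f g| ^+ p = #|G|%:R * s -> cnorm p f = (complex.Re s) `^ p%:R^-1.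
Proof.
move=> G_gt0 sumE; rewrite /cnorm -Re_sum sumE Re_natrM mulKf //.
by rewrite pnatr_eq0 -lt0n.
Qed.

Lemma cnorm0 p : (0 < p)%N -> cnorm p (fun _ : G => 0 : C) = 0.
Proof.
move=> p_gt0; rewrite /cnorm big1 ?mulr0 ?powR0 // => [|g _].
  by rewrite invr_eq0 pnatr_eq0 -lt0n.
by rewrite normr0 expr0n gtn_eqF.
Qed.

Lemma cnorm_gt0 p (f : G -> C) : (0 < p)%N -> f <> (fun=> 0) -> 0 < cnorm p f.
Proof.
move=> p_gt0 f_neq0; have [g fg_neq0] : exists g, f g != 0.
  apply/existsP; apply: contra_notT f_neq0 => /existsPn f0.
  by apply: funext => g; apply/eqP/negPn/f0.
apply: powR_gt0; apply: mulr_gt0.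
  by rewrite invr_gt0 ltr0n; apply/card_gt0P; exists g.
rewrite (bigD1 g) //=; apply: ltr_pwDl.
  by apply: (Re_ltr (z := 0)); rewrite exprn_gt0 ?normr_gt0.
by apply: sumr_ge0 => h _; apply: (Re_ler (z := 0)); rewrite exprn_ge0.
Qed.

End ClassicalNorms.

Lemma qnorm24_le_cnorm24 (R : realType) D (G : finType) (g0 : G)
  (S : 'M[R[i]]_D -> 'M[R[i]]_D) (A : (G -> R[i]) -> G -> R[i]) :
  A (fun=> 0) = (fun=> 0) ->
  (forall X, X != 0 ->
     exists2 f, cnorm 2 f <= qnorm2 X & qnorm4 (S X) <= cnorm 4 (A f)) ->
  (qnorm24 S <= cnorm24 A)%E.
Proof.
move=> A0 dominated.
have cnorm24_ge0 : (0 <= cnorm24 A)%E.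
  pose one : G -> R[i] := fun=> 1.
  apply: le_ereal_sup_tmp; exists ((cnorm 4 (A one) / cnorm 2 one)%:E).
    by exists one => // /(congr1 (@^~ g0)) /eqP; rewrite oner_eq0.
  by rewrite lee_fin divr_ge0 ?powR_ge0.
apply: ge_ereal_sup => _ [X X_neq0 <-]; have [f f2_le f4_ge] := dominated X X_neq0.
have [f0|f_neq0] := pselect (f = fun=> 0).
  rewrite f0 A0 cnorm0 // in f4_ge.
  have -> : qnorm4 (S X) = 0 by apply/le_anti; rewrite f4_ge powR_ge0.
  by rewrite mul0r.
apply: le_ereal_sup_tmp; exists ((cnorm 4 (A f) / cnorm 2 f)%:E); first by exists f.
have f2_gt0 : 0 < cnorm 2 f by apply: cnorm_gt0.
rewrite lee_fin ler_pM ?invr_ge0 ?powR_ge0 //.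
by rewrite lef_pV2 ?posrE // (lt_le_trans f2_gt0).
Qed.

Close Scope classical_set_scope.
Close Scope complex_scope.

Theorem mainTheorem20 (R : realType) (d1 d2 : nat) (G1 G2 : finZmodType)
  (L1 : 'M[R[i]]_d1 -> 'M[R[i]]_d1) (L2 : 'M[R[i]]_d2 -> 'M[R[i]]_d2)
  (U1 : G1 -> 'M[R[i]]_d1) (lam1 : G1 -> R[i])
  (U2 : G2 -> 'M[R[i]]_d2) (lam2 : G2 -> R[i])
  (chi1 : G1 -> G1 -> R[i]) (chi2 : G2 -> G2 -> R[i]) :
  liouvillian L1 -> unital L1 -> reversible L1 ->
  ac_unitary_eigenbasis L1 U1 lam1 ->
  liouvillian L2 -> unital L2 -> reversible L2 ->
  ac_unitary_eigenbasis L2 U2 lam2 ->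
  character_iso chi1 -> character_iso chi2 ->
  forall t : R, 0 <= t ->
  (qnorm24 (suptens (expL L1 t) (expL L2 t))
     <= cnorm24 (ctens (classical_sg chi1 lam1 t) (classical_sg chi2 lam2 t)))%E.
Proof.
move=> L1_liouvillian _ L1_reversible U1P L2_liouvillian _ L2_reversible U2P chi1P chi2P t _.
apply: (qnorm24_le_cnorm24 (0 : G1 * G2)); first exact: ctens0.
move=> X _; pose W := tens_basis U1 U2; pose D := (d1 * d2)%N.
have D_gt0 : (0 < D)%N by rewrite muln_gt0 (eigenbasis_dim_gt0 U1P) (eigenbasis_dim_gt0 U2P).
have card_gt0 : (0 < #|{: G1 * G2}|)%N by apply/card_gt0P; exists 0.
pose x k := hs_inner (W k) X / D%:R.
pose chi := prod_char chi1 chi2.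
have chiM := prod_char_addl chi1P chi2P; have chiJ := conj_prod_char chi1P chi2P.
have chi_sum := sum_prod_char chi1P chi2P.
exists (fourier_synthesis chi (fun k => `|x k|)).
  rewrite (cnorm_eq card_gt0 (sum_sqr_norm_fourier_synthesis chiM chiJ chi_sum _)).
  under eq_bigr do rewrite normr_id.
  exact: qnorm2_ge_coef D_gt0 (tens_basis_orth U1P U2P) X.
have lam1_real := eigenvalue_real U1P L1_reversible.
have lam2_real := eigenvalue_real U2P L2_reversible.
rewrite (ctens_fourier_synthesis chi1P chi2P lam1_real lam2_real).
rewrite (cnorm_eq card_gt0 (sum_norm4_fourier_synthesis chiM chiJ chi_sum _)).
rewrite (suptens_expL U1P U2P) //.
apply: le_trans (qnorm4_sum_le D_gt0 (norm_mxtrace_tens_basis4 U1P U2P) _) _.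
rewrite le_eqVlt; apply/predU1P; left; congr (complex.Re (quartic_form _) `^ _).
apply: funext => k; rewrite normrM ger0_norm // -rmorphM /=.
by rewrite lecR mulr_ge0 ?expR_ge0.
Qed.
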